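(* Let $P$ be a commutative ring, $x,y$ a regular sequence in $P$, and $a,n,r$ integers with $a\ge0$, $n\ge1$, $0\le r\le n-1$; let $f=x^n+y^n$ and $N=an+r$. Assume $f$ is a regular element of $P$ and let $R=P/(f)$. Put $$D=\begin{bmatrix}x^{n-r}&(-1)^{a-1}y^r\\(-1)^ay^{n-r}&x^r\end{bmatrix},\qquad \check D=\begin{bmatrix}x^r&(-1)^ay^r\\(-1)^{a+1}y^{n-r}&x^{n-r}\end{bmatrix}.$$ Then $$\cdots\xrightarrow{\check D}R^2\xrightarrow{D}R^2\xrightarrow{\check D}R^2\xrightarrow{D}R^2\xrightarrow{[x^N\ y^N]}R\to R/(x^N,y^N)R\to0$$ is a resolution of $R/(x^N,y^N)R$ by free $R$-modules. *)

From HB Require Import structures.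
From mathcomp Require Import all_boot all_order all_algebra.
Set Implicit Arguments. Unset Strict Implicit. Unset Printing Implicit Defensive.
Import GRing.Theory.
Local Open Scope ring_scope.

Definition regular_elt (P : comRingType) (f : P) : Prop :=
  forall p : P, f * p = 0 -> p = 0.

(* x, y is a regular sequence in P:
   x is a non-zero-divisor on P, y is a non-zero-divisor on P/(x),
   and P/(x,y) <> 0, i.e. (x,y) is a proper ideal. *)
Definition regular_seq2 (P : comRingType) (x y : P) : Prop :=
  [/\ regular_elt x,
      (forall p q : P, y * p = x * q -> exists s : P, p = x * s)
    & ~ (exists a b : P, a * x + b * y = 1)].

(* Congruence of matrices over P modulo f, i.e. equality of their images
   in matrices over R = P/(f). *)
Definition eqmod (P : comRingType) (f : P) (m n : nat) (A B : 'M[P]_(m, n)) : Prop :=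
  exists C : 'M[P]_(m, n), A - B = f *: C.

(* Exactness over R = P/(f) of  R^p --B--> R^n --A--> R^m  (matrices acting on
   column vectors, with entries reduced mod f): A*B = 0 in R and ker A = im B. *)
Definition exact_mod (P : comRingType) (f : P) (m n p : nat)
    (A : 'M[P]_(m, n)) (B : 'M[P]_(n, p)) : Prop :=
  eqmod f (A *m B) 0 /\
  forall u : 'cV[P]_n, eqmod f (A *m u) 0 ->
    exists v : 'cV[P]_p, eqmod f (B *m v) u.

Definition mx2 (P : comRingType) (a b c d : P) : 'M[P]_2 :=
  \matrix_(i < 2, j < 2)
    if (i == 0 :> nat) then (if (j == 0 :> nat) then a else b)
    else (if (j == 0 :> nat) then c else d).

Definition row2 (P : comRingType) (a b : P) : 'M[P]_(1, 2) :=
  \row_(j < 2) if (j == 0 :> nat) then a else b.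

(* D and Dc are adjugate 2x2 matrices of determinant f = x^n + y^n, i.e. a
   matrix factorization of the regular element f, so the periodic part of the
   complex is exact over P/(f).  The columns of D are syzygies of (x^N, y^N)
   modulo f because x^n + y^n divides x^(kn) - (-y^n)^k.  Conversely, a
   relation x^N u1 + y^N u2 in (f) with N = an + r is reduced to the case
   a = 0 by induction on a, each step using that the syzygies of (x^n, y^n)
   are multiples of the Koszul relation; this holds because powers of a
   regular sequence form a regular sequence. *)

From HB Require Import structures.
From mathcomp Require Import all_boot all_order all_algebra.
From mathcomp Require Import ring.
Set Implicit Arguments.
Unset Strict Implicit.
Unset Printing Implicit Defensive.

Import GRing.Theory.
Local Open Scope ring_scope.

Section RegularSequence.

Variables (R : comRingType) (x y : R).

Lemma regular_elt_cancel (z p q : R) : regular_elt z -> z * p = z * q -> p = q.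
Proof.
move=> rz epq; apply/eqP; rewrite -subr_eq0; apply/eqP/rz.
by rewrite mulrBr epq subrr.
Qed.

Lemma regular_eltX (z : R) (k : nat) : regular_elt z -> regular_elt (z ^+ k).
Proof.
move=> rz; elim: k => [|k IHk] p; first by rewrite expr0 mul1r.
by rewrite exprS -mulrA => /rz /IHk.
Qed.

Hypothesis hxy : regular_seq2 x y.

Lemma regular_seq2_Gauss1 (m : nat) (p q : R) :
  y * p = x ^+ m * q -> exists t, p = x ^+ m * t.
Proof.
have [rx ry _] := hxy.
elim: m p q => [|m IHm] p q; first by exists p; rewrite mul1r.
rewrite exprS -mulrA => ypq.
have [s ps] := ry _ _ ypq.
move: ypq; rewrite ps mulrCA => /(regular_elt_cancel rx) /IHm [t st].
by exists t; rewrite st mulrA.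
Qed.

Lemma regular_seq2_Gauss (k m : nat) (p q : R) :
  y ^+ k * p = x ^+ m * q -> exists t, p = x ^+ m * t.
Proof.
elim: k p q => [|k IHk] p q; first by rewrite mul1r => ->; exists q.
by rewrite exprSr -mulrA => /IHk [t /regular_seq2_Gauss1].
Qed.

Lemma koszul_syzygy (k l : nat) (u v : R) :
  x ^+ k * u + y ^+ l * v = 0 -> exists t, u = y ^+ l * t /\ v = - (x ^+ k * t).
Proof.
move=> /eqP; rewrite addr_eq0 -mulrN eq_sym => /eqP uv.
have [t vt] := regular_seq2_Gauss uv.
exists t; split; last by rewrite -vt opprK.
have [rx _ _] := hxy.
apply: (regular_elt_cancel (regular_eltX (k := k) rx)).
by rewrite -uv vt mulrCA.
Qed.

End RegularSequence.

Section PowerKernel.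

Variables (R : comRingType) (x y : R) (n r : nat).
Hypotheses (hxy : regular_seq2 x y) (hrn : (r <= n)%N).

Lemma row2_pow_kernel (a : nat) (u1 u2 c : R) :
  x ^+ (a * n + r) * u1 + y ^+ (a * n + r) * u2 = (x ^+ n + y ^+ n) * c ->
  exists v1 v2, u1 = x ^+ (n - r) * v1 + (-1) ^+ a.+1 * y ^+ r * v2 /\
                u2 = (-1) ^+ a * y ^+ (n - r) * v1 + x ^+ r * v2.
Proof.
elim: a u1 u2 c => [|a IHa] u1 u2 c.
  rewrite mul0n add0n -[in x ^+ n](subnKC hrn) -[in y ^+ n](subnKC hrn) !exprD.
  move=> hc.
  have [|t [h1 h2]] := koszul_syzygy hxy (k := r) (l := r)
                                         (u := u1 - x ^+ (n - r) * c)
                                         (v := u2 - y ^+ (n - r) * c).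
    by rewrite -(subrr (x ^+ r * u1 + y ^+ r * u2)) {2}hc; ring.
  exists c, (- t); split.
    by rewrite -(subrK (x ^+ (n - r) * c) u1) h1; ring.
  by rewrite -(subrK (y ^+ (n - r) * c) u2) h2; ring.
rewrite mulSn -addnA (exprD x) (exprD y) => hc.
set M := (a * n + r)%N in hc IHa.
have [|t [h1 h2]] := koszul_syzygy hxy (k := n) (l := n)
                                       (u := x ^+ M * u1 - c)
                                       (v := y ^+ M * u2 - c).
  by rewrite -(subrr (x ^+ n * x ^+ M * u1 + y ^+ n * y ^+ M * u2)) {2}hc; ring.
have [|v1 [v2 [hv1 hv2]]] := IHa u1 (- u2) t.
  by rewrite -(subrK c (x ^+ M * u1)) h1 -[u2]opprK mulrN opprK
             -(subrK c (y ^+ M * u2)) h2; ring.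
exists v1, (- v2); split.
  by rewrite hv1 [(-1) ^+ a.+2]exprS; ring.
by rewrite -[u2]opprK hv2 exprS; ring.
Qed.

End PowerKernel.

Section TwoByTwo.

Variable R : comRingType.

Definition col2 (p q : R) : 'cV[R]_2 :=
  \col_(i < 2) if (i == 0 :> nat) then p else q.

Lemma col2_eta (u : 'cV[R]_2) : u = col2 (u 0 0) (u 1 0).
Proof.
apply/matrixP => i j; rewrite !mxE (ord1 j).
by case: i => [[|[|i]] Hi] //=; congr (u _ _); apply: val_inj.
Qed.

Lemma mx2_mul (a b c d a' b' c' d' : R) :
  mx2 a b c d *m mx2 a' b' c' d' =
  mx2 (a * a' + b * c') (a * b' + b * d') (c * a' + d * c') (c * b' + d * d').
Proof.
apply/matrixP => i j; rewrite !mxE !big_ord_recr big_ord0 /= add0r !mxE /=.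
by case: i => [[|[|i]] Hi] //; case: j => [[|[|j]] Hj].
Qed.

Lemma mx2_mul_col2 (a b c d p q : R) :
  mx2 a b c d *m col2 p q = col2 (a * p + b * q) (c * p + d * q).
Proof.
apply/matrixP => i j; rewrite !mxE !big_ord_recr big_ord0 /= add0r !mxE /=.
by case: i => [[|[|i]] Hi].
Qed.

Lemma row2_mul (a b a' b' c' d' : R) :
  row2 a b *m mx2 a' b' c' d' = row2 (a * a' + b * c') (a * b' + b * d').
Proof.
apply/matrixP => i j; rewrite !mxE !big_ord_recr big_ord0 /= add0r !mxE /=.
by case: j => [[|[|j]] Hj].
Qed.

Lemma row2_mul_col2 (a b p q : R) : row2 a b *m col2 p q = (a * p + b * q)%:M.
Proof.
apply/matrixP => i j; rewrite (ord1 i) (ord1 j) !mxE.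
by rewrite !big_ord_recr big_ord0 /= add0r !mxE.
Qed.

Lemma scale_mx2_1 (f : R) : f *: (1%:M : 'M[R]_2) = mx2 f 0 0 f.
Proof.
apply/matrixP => i j; rewrite !mxE.
by case: i => [[|[|i]] Hi] //; case: j => [[|[|j]] Hj] //=; rewrite ?mulr1 ?mulr0.
Qed.

Lemma mx2_mul_adj (p q u v : R) :
  mx2 p q u v *m mx2 v (- q) (- u) p = (p * v - q * u) *: 1%:M.
Proof. by rewrite mx2_mul scale_mx2_1; congr mx2; ring. Qed.

Lemma mx2_adj_mul (p q u v : R) :
  mx2 v (- q) (- u) p *m mx2 p q u v = (p * v - q * u) *: 1%:M.
Proof.
by rewrite -{2}[q]opprK -{2}[u]opprK mx2_mul_adj; congr (_ *: _); ring.
Qed.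

End TwoByTwo.

Section MatrixFactorization.

Variables (R : comRingType) (f : R).

Lemma eqmod_refl (m n : nat) (A : 'M[R]_(m, n)) : eqmod f A A.
Proof. by exists 0; rewrite subrr scaler0. Qed.

Lemma eqmod_row2_0 (p q : R) :
  (exists c, p = f * c) -> (exists d, q = f * d) -> eqmod f (row2 p q) 0.
Proof.
move=> [c ->] [d ->]; exists (row2 c d); rewrite subr0.
by apply/matrixP => i j; rewrite !mxE; case: ifP.
Qed.

Lemma eqmod_scalar_0 (p : R) : eqmod f (p%:M : 'M_1) 0 -> exists c, p = f * c.
Proof.
move=> [C /matrixP/(_ 0 0)]; rewrite !mxE /= subr0 mulr1n => ->.
by exists (C 0 0).
Qed.

Hypothesis hf : regular_elt f.

Lemma exact_mod_factorization (k : nat) (A B : 'M[R]_k) :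
  A *m B = f *: 1%:M -> B *m A = f *: 1%:M -> exact_mod f A B.
Proof.
move=> hAB hBA; split; first by exists 1%:M; rewrite subr0.
move=> u [C]; rewrite subr0 => hC; exists C; exists 0; rewrite scaler0.
have : f *: (B *m C - u) = 0.
  by rewrite scalerBr scalemxAr -hC mulmxA hBA -scalemxAl mul1mx subrr.
move=> /matrixP hfz; apply/matrixP => i j; rewrite !mxE; apply: hf.
by have := hfz i j; rewrite !mxE.
Qed.

Lemma exact_mod_mx2_adj (p q u v : R) : p * v - q * u = f ->
  exact_mod f (mx2 p q u v) (mx2 v (- q) (- u) p) /\
  exact_mod f (mx2 v (- q) (- u) p) (mx2 p q u v).
Proof.
by move=> hdet; split; apply: exact_mod_factorization;
  rewrite ?mx2_mul_adj ?mx2_adj_mul hdet.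
Qed.

End MatrixFactorization.

Lemma addr_dvd_subrXXN (R : comRingType) (A B : R) (k : nat) :
  exists c, A ^+ k - (- B) ^+ k = (A + B) * c.
Proof.
by exists (\sum_(i < k) A ^+ (k.-1 - i) * (- B) ^+ i); rewrite subrXX opprK.
Qed.

Section PowerRowExactness.

Variables (R : comRingType) (x y : R) (n r : nat).
Hypotheses (hxy : regular_seq2 x y) (hrn : (r <= n)%N).

Lemma exact_mod_row2_pow (a : nat) :
  exact_mod (x ^+ n + y ^+ n) (row2 (x ^+ (a * n + r)) (y ^+ (a * n + r)))
    (mx2 (x ^+ (n - r)) ((-1) ^+ a.+1 * y ^+ r)
         ((-1) ^+ a * y ^+ (n - r)) (x ^+ r)).
Proof.
have hx : x ^+ n = x ^+ r * x ^+ (n - r) by rewrite -exprD subnKC.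
have hy : y ^+ n = y ^+ r * y ^+ (n - r) by rewrite -exprD subnKC.
have hxN : x ^+ (a * n + r) = (x ^+ n) ^+ a * x ^+ r by rewrite exprD mulnC exprM.
have hyN : y ^+ (a * n + r) = (y ^+ n) ^+ a * y ^+ r by rewrite exprD mulnC exprM.
split.
- rewrite row2_mul; apply: eqmod_row2_0.
  + have [c hc] := addr_dvd_subrXXN (x ^+ n) (y ^+ n) a.+1.
    by exists c; rewrite -hc (exprNn (y ^+ n)) hxN hyN !exprS hx hy; ring.
  + have [c hc] := addr_dvd_subrXXN (y ^+ n) (x ^+ n) a.
    exists (x ^+ r * y ^+ r * c).
    rewrite [RHS]mulrCA [x ^+ n + _]addrC -hc (exprNn (x ^+ n)) hxN hyN.
    by rewrite exprS hx hy; ring.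
- move=> u; rewrite [u]col2_eta row2_mul_col2 => /eqmod_scalar_0 [c hc].
  have [v1 [v2 [h1 h2]]] := row2_pow_kernel hxy hrn hc.
  by exists (col2 v1 v2); rewrite mx2_mul_col2 -h1 -h2; apply: eqmod_refl.
Qed.

End PowerRowExactness.

Theorem corollary9p3 (P : comRingType) (x y : P) (a n r : nat)
  (hxy : regular_seq2 x y) (hn : (1 <= n)%N) (hr : (r <= n.-1)%N)
  (hf : regular_elt (x ^+ n + y ^+ n)) :
  let f := x ^+ n + y ^+ n in
  let N := (a * n + r)%N in
  let D := mx2 (x ^+ (n - r)) ((-1) ^+ a.+1 * y ^+ r)
               ((-1) ^+ a * y ^+ (n - r)) (x ^+ r) in
  let Dc := mx2 (x ^+ r) ((-1) ^+ a * y ^+ r)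
                ((-1) ^+ a.+1 * y ^+ (n - r)) (x ^+ (n - r)) in
  [/\ exact_mod f (row2 (x ^+ N) (y ^+ N)) D,
      exact_mod f D Dc
    & exact_mod f Dc D].
Proof.
move=> f N D Dc.
have hrn : (r <= n)%N := leq_trans hr (leq_pred n).
have hDc : Dc = mx2 (x ^+ r) (- ((-1) ^+ a.+1 * y ^+ r))
                    (- ((-1) ^+ a * y ^+ (n - r))) (x ^+ (n - r)).
  by rewrite /Dc !exprS !mulN1r !mulNr opprK.
have hdet : x ^+ (n - r) * x ^+ r
             - (-1) ^+ a.+1 * y ^+ r * ((-1) ^+ a * y ^+ (n - r)) = f.
  transitivity (x ^+ (n - r) * x ^+ r
                + (-1) ^+ a * (-1) ^+ a * (y ^+ r * y ^+ (n - r))).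
    by rewrite exprS; ring.
  by rewrite -expr2 sqrr_sign mul1r -!exprD subnK // subnKC.
have [exD exDc] := exact_mod_mx2_adj hf hdet.
by rewrite hDc; split => //; apply: exact_mod_row2_pow.
Qed.
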